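(* Let $f\in C^2([0,\infty))$ satisfy $f(u)>0$ and $f'(u)>0$ for all $u>0$, and assume $f$ is log-concave, i.e. \[ f''(u)f(u)-f'(u)^2<0\quad\text{for all } u>0 . \] Let $u(r)$ be a positive solution of \[ u''+\frac{1}{r}u'+f(u)=0,\quad 0<r<1,\qquad u'(0)=u(1)=0 . \] Then any non-trivial solution $w(r)$ of the linearized problem \[ w''+\frac{1}{r}w'+f'(u(r))w=0,\quad 0<r<1,\qquad w'(0)=w(1)=0 \] does not vanish on $[0,1)$; i.e., replacing $w$ by $-w$ if necessary, $w(r)>0$ on $[0,1)$.
   Context: This is the radial form of the problem $\Delta u+f(u)=0$ on the unit disk in $\mathbb{R}^2$ with zero Dirichlet boundary data. *)

From Stdlib Require Import Reals.
From Coquelicot Require Import Coquelicot.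
Open Scope R_scope.

Definition right_deriv (g : R -> R) (x l : R) : Prop :=
  filterlim (fun h => (g (x + h) - g x) / h) (at_right 0) (locally l).

Definition C2_on_nonneg (f f1 f2 : R -> R) : Prop :=
  (forall x, 0 < x ->
     is_derive f x (f1 x) /\ is_derive f1 x (f2 x) /\ continuous f2 x) /\
  right_deriv f 0 (f1 0) /\ right_deriv f1 0 (f2 0) /\
  filterlim f2 (at_right 0) (locally (f2 0)).

Definition radial_sol (q : R -> R -> R) (v : R -> R) : Prop :=
  (forall r, 0 < r < 1 ->
     ex_derive v r /\ ex_derive (Derive v) r /\
     Derive (Derive v) r + / r * Derive v r + q r (v r) = 0) /\
  right_deriv v 0 0 /\
  filterlim v (at_left 1) (locally (v 1)) /\
  v 1 = 0.

(* If w(0) = 0, uniqueness for the linear equation forces w = 0: near r = 0 the flux r w'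
   controls w', and near any other point the equation is regular; in both cases a bound on
   w (and w') on a short interval reproduces itself multiplied by a factor < 1.
   Otherwise, replacing w by -w, let w(0) > 0 and suppose w has a first zero xi in (0,1).
   The flux r u' decreases from 0, so gam = -xi u'(xi) > 0 and zeta = r u' + gam is
   decreasing with a simple zero at xi.  The Picone-type function
     E = r w w' + r^2 w^2 f(u) / zeta
   satisfies E' = r (w' + r w f(u) / zeta)^2 + r w^2 (2 f(u) - gam f'(u)) / zeta and tends
   to 0 at 0, at xi and at 1.  By log-concavity f'(u(r)) / f(u(r)) increases with r, so
   either 2 f(u) - gam f'(u) > 0 on (0,xi), and E increases strictly on (0,xi), or
   2 f(u) - gam f'(u) < 0 on (xi,1), and E is nondecreasing on (xi,1) and increases
   strictly just after xi, where w < 0.  Both contradict the limits of E. *)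

From Stdlib Require Import Reals Lra Classical FunctionalExtensionality.
From Coquelicot Require Import Coquelicot.
Open Scope R_scope.

(** * Eventual bounds and one-sided limits *)

Lemma ball_R x e y : ball x e y <-> Rabs (y - x) < e.
Proof. reflexivity. Qed.

Lemma at_right_iff a (P : R -> Prop) :
  at_right a P <-> exists d, 0 < d /\ forall s, a < s < a + d -> P s.
Proof.
  split.
  - intros [d Hd]. exists d. split; [apply cond_pos|].
    intros s Hs. apply Hd; [apply ball_R; rewrite Rabs_right|]; lra.
  - intros [d [Hd H]]. exists (mkposreal d Hd). intros s Hs Has.
    change (Rabs (s - a) < d) in Hs. apply Rabs_def2 in Hs. apply H. lra.
Qed.

Lemma at_left_iff b (P : R -> Prop) :
  at_left b P <-> exists d, 0 < d /\ forall s, b - d < s < b -> P s.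
Proof.
  split.
  - intros [d Hd]. exists d. split; [apply cond_pos|].
    intros s Hs. apply Hd; [apply ball_R; rewrite Rabs_left|]; lra.
  - intros [d [Hd H]]. exists (mkposreal d Hd). intros s Hs Hsb.
    change (Rabs (s - b) < d) in Hs. apply Rabs_def2 in Hs. apply H. lra.
Qed.

Lemma filterlim_eps {T} {F : (T -> Prop) -> Prop} {FF : Filter F} (g : T -> R) l :
  filterlim g F (locally l) -> forall eps, 0 < eps -> F (fun x => Rabs (g x - l) < eps).
Proof.
  intros H eps Heps. apply (proj1 (filterlim_locally g l) H (mkposreal eps Heps)).
Qed.

Lemma filterlim_of_eps {T} {F : (T -> Prop) -> Prop} {FF : Filter F} (g : T -> R) l :
  (forall eps, 0 < eps -> F (fun x => Rabs (g x - l) < eps)) -> filterlim g F (locally l).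
Proof.
  intros H. apply filterlim_locally. intros [eps Heps]. exact (H eps Heps).
Qed.

Definition bounded_near {T} (F : (T -> Prop) -> Prop) (g : T -> R) : Prop :=
  exists K, F (fun x => Rabs (g x) <= K).

Section BoundedNear.

Context {T : Type} {F : (T -> Prop) -> Prop} {FF : Filter F}.

Lemma bounded_near_of_filterlim (g : T -> R) l :
  filterlim g F (locally l) -> bounded_near F g.
Proof.
  intros H. exists (Rabs l + 1).
  eapply filter_imp; [|exact (filterlim_eps g l H 1 Rlt_0_1)]; intros x Hx; cbv beta in Hx |- *.
  pose proof (Rabs_triang_inv (g x) l). lra.
Qed.

Lemma bounded_near_plus (g h : T -> R) :
  bounded_near F g -> bounded_near F h -> bounded_near F (fun x => g x + h x).
Proof.
  intros [Kg Hg] [Kh Hh]. exists (Kg + Kh).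
  eapply filter_imp; [|exact (filter_and _ _ Hg Hh)]; intros x Hx; cbv beta in Hx |- *.
  pose proof (Rabs_triang (g x) (h x)). lra.
Qed.

Lemma bounded_near_mult (g h : T -> R) :
  bounded_near F g -> bounded_near F h -> bounded_near F (fun x => g x * h x).
Proof.
  intros [Kg Hg] [Kh Hh]. exists (Kg * Kh).
  eapply filter_imp; [|exact (filter_and _ _ Hg Hh)]; intros x Hx; cbv beta in Hx |- *.
  rewrite Rabs_mult. apply Rmult_le_compat; try apply Rabs_pos; apply Hx.
Qed.

Lemma bounded_near_inv (g : T -> R) c :
  0 < c -> F (fun x => c <= Rabs (g x)) -> bounded_near F (fun x => / g x).
Proof.
  intros Hc Hg. exists (/ c). eapply filter_imp; [|exact Hg]; intros x Hx; cbv beta in Hx |- *.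
  assert (g x <> 0) by (intros E; rewrite E, Rabs_R0 in Hx; lra).
  rewrite Rabs_inv. apply Rinv_le_contravar; lra.
Qed.

Lemma filterlim_mult_bounded (g h : T -> R) :
  filterlim g F (locally 0) -> bounded_near F h ->
  filterlim (fun x => g x * h x) F (locally 0).
Proof.
  intros Hg [K Hh]. apply filterlim_of_eps. intros eps Heps.
  assert (HK : 0 < Rabs K + 1) by (pose proof (Rabs_pos K); lra).
  eapply filter_imp; [|exact (filter_and _ _ Hh
    (filterlim_eps g 0 Hg (eps / (Rabs K + 1)) ltac:(apply Rdiv_lt_0_compat; lra)))].
  intros x Hx; cbv beta in Hx |- *.
  destruct Hx as [Hhx Hgx]. rewrite Rminus_0_r in *. rewrite Rabs_mult.
  apply Rle_lt_trans with (Rabs (g x) * (Rabs K + 1)).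
  - apply Rmult_le_compat_l; [apply Rabs_pos|]. pose proof (Rle_abs K). lra.
  - replace eps with (eps / (Rabs K + 1) * (Rabs K + 1)) by (field; lra).
    apply Rmult_lt_compat_r; lra.
Qed.

End BoundedNear.

Lemma filterlim_le_const {T} {F : (T -> Prop) -> Prop} {FF : ProperFilter F} (g : T -> R) l c :
  F (fun x => g x <= c) -> filterlim g F (locally l) -> l <= c.
Proof.
  intros H Hg. apply (filterlim_le (F := F) g (fun _ => c) l c H Hg (filterlim_const c)).
Qed.

Lemma filterlim_ge_const {T} {F : (T -> Prop) -> Prop} {FF : ProperFilter F} (g : T -> R) l c :
  F (fun x => c <= g x) -> filterlim g F (locally l) -> c <= l.
Proof.
  intros H Hg. apply (filterlim_le (F := F) (fun _ => c) g c l H (filterlim_const c) Hg).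
Qed.

Lemma le_of_le_plus_vanishing {T} {F : (T -> Prop) -> Prop} {FF : ProperFilter F}
    (g : T -> R) X Y :
  filterlim g F (locally 0) -> F (fun x => X <= Y + Rabs (g x)) -> X <= Y.
Proof.
  intros Hg H. apply Rle_plus_epsilon. intros eps Heps.
  destruct (filter_ex _ (filter_and _ _ H (filterlim_eps g 0 Hg eps Heps))) as [x [Hx Hgx]].
  rewrite Rminus_0_r in Hgx. lra.
Qed.

Lemma right_deriv_filterlim g x l :
  right_deriv g x l -> filterlim g (at_right x) (locally (g x)).
Proof.
  intros H. apply filterlim_of_eps. intros eps Heps.
  destruct (proj1 (at_right_iff 0 _) (filterlim_eps _ l H 1 Rlt_0_1)) as [d [Hd Hq]].
  assert (Hl : 0 < Rabs l + 1) by (pose proof (Rabs_pos l); lra).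
  apply at_right_iff. exists (Rmin d (eps / (Rabs l + 1))). split.
  { apply Rmin_pos; [lra | apply Rdiv_lt_0_compat; lra]. }
  intros y Hy. set (h := y - x).
  pose proof (Rmin_l d (eps / (Rabs l + 1))). pose proof (Rmin_r d (eps / (Rabs l + 1))).
  assert (Hh : 0 < h < d) by (unfold h; lra).
  specialize (Hq h ltac:(lra)).
  replace (g y - g x) with (h * ((g (x + h) - g x) / h - l) + h * l)
    by (unfold h; replace (x + (y - x)) with y by ring; field; lra).
  eapply Rle_lt_trans; [apply Rabs_triang|]. rewrite !Rabs_mult, Rabs_right by lra.
  apply Rle_lt_trans with (h * (Rabs l + 1)); [nra|].
  replace eps with (eps / (Rabs l + 1) * (Rabs l + 1)) by (field; lra).
  apply Rmult_lt_compat_r; unfold h; lra.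
Qed.

Lemma filterlim_id_at_right a : filterlim (fun s => s) (at_right a) (locally a).
Proof. eapply filterlim_filter_le_1; [apply filter_le_within | apply filterlim_id]. Qed.

Lemma filterlim_id_at_left a : filterlim (fun s => s) (at_left a) (locally a).
Proof. eapply filterlim_filter_le_1; [apply filter_le_within | apply filterlim_id]. Qed.

Lemma filterlim_at_right_of_pos {T} {F : (T -> Prop) -> Prop} {FF : Filter F} (g : T -> R) :
  filterlim g F (locally 0) -> F (fun x => 0 < g x) -> filterlim g F (at_right 0).
Proof.
  intros Hg Hpos P HP.
  eapply filter_imp; [|exact (filter_and _ _ (Hg _ HP) Hpos)].
  intros x [H1 H2]. exact (H1 H2).
Qed.

(** * Calculus on intervals *)

Lemma MVT_open (E dE : R -> R) x y :
  x < y -> (forall z, x <= z <= y -> is_derive E z (dE z)) ->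
  exists c, x < c < y /\ E y - E x = dE c * (y - x).
Proof.
  intros Hxy HE. destruct (MVT_cor2 E dE x y Hxy) as [c [Ec Hc]].
  - intros z Hz. apply is_derive_Reals, HE, Hz.
  - exists c. auto.
Qed.

Section Monotonicity.

Variables (E dE : R -> R) (x y : R).
Hypothesis HE : forall z, x <= z <= y -> is_derive E z (dE z).

Lemma increasing_of_derive_pos :
  x < y -> (forall z, x < z < y -> 0 < dE z) -> E x < E y.
Proof.
  intros Hxy Hpos. destruct (MVT_open E dE x y Hxy HE) as [c [Hc Ec]].
  specialize (Hpos c Hc). nra.
Qed.

Lemma decreasing_of_derive_neg :
  x < y -> (forall z, x < z < y -> dE z < 0) -> E y < E x.
Proof.
  intros Hxy Hneg. destruct (MVT_open E dE x y Hxy HE) as [c [Hc Ec]].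
  specialize (Hneg c Hc). nra.
Qed.

Lemma nondecreasing_of_derive_nonneg :
  x <= y -> (forall z, x < z < y -> 0 <= dE z) -> E x <= E y.
Proof.
  intros Hxy Hpos. destruct (Rle_lt_or_eq_dec x y Hxy) as [Hlt|<-]; [|lra].
  destruct (MVT_open E dE x y Hlt HE) as [c [Hc Ec]].
  specialize (Hpos c Hc). nra.
Qed.

Lemma nonincreasing_of_derive_nonpos :
  x <= y -> (forall z, x < z < y -> dE z <= 0) -> E y <= E x.
Proof.
  intros Hxy Hneg. destruct (Rle_lt_or_eq_dec x y Hxy) as [Hlt|<-]; [|lra].
  destruct (MVT_open E dE x y Hlt HE) as [c [Hc Ec]].
  specialize (Hneg c Hc). nra.
Qed.

End Monotonicity.

Lemma continuous_le_of_left (g h : R -> R) x :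
  continuous g x -> continuous h x -> at_left x (fun s => g s <= h s) -> g x <= h x.
Proof.
  intros Hg Hh H.
  apply (filterlim_le (F := at_left x) g h (g x) (h x) H);
    eapply filterlim_filter_le_1; try apply filter_le_within; assumption.
Qed.

Lemma derive_eq_0_of_left_zero (g : R -> R) x l :
  is_derive g x l -> at_left x (fun s => g s = 0) -> g x = 0 -> l = 0.
Proof.
  intros Hd Hz Hx. apply is_derive_Reals in Hd.
  destruct (Req_dec l 0) as [|Hl]; [assumption|exfalso].
  destruct (Hd (Rabs l) (Rabs_pos_lt l Hl)) as [delta Hdelta].
  apply at_left_iff in Hz as [d [Hd0 Hz]].
  set (h := - Rmin d delta / 2).
  pose proof (cond_pos delta). pose proof (Rmin_l d delta). pose proof (Rmin_r d delta).
  assert (0 < Rmin d delta) by (apply Rmin_pos; lra).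
  specialize (Hdelta h ltac:(unfold h; lra) ltac:(unfold h; rewrite Rabs_left; lra)).
  rewrite Hz, Hx in Hdelta by (unfold h; lra).
  replace ((0 - 0) / h - l) with (- l) in Hdelta by (field; unfold h; lra).
  rewrite Rabs_Ropp in Hdelta. lra.
Qed.

Lemma at_right_neg_of_derive_neg (g : R -> R) x l :
  is_derive g x l -> l < 0 -> g x = 0 -> at_right x (fun s => g s < 0).
Proof.
  intros Hg Hl Hgx. apply is_derive_Reals in Hg.
  destruct (Hg (- l / 2) ltac:(lra)) as [d Hd].
  apply at_right_iff. exists d. split; [apply cond_pos|]. intros s Hs.
  specialize (Hd (s - x) ltac:(lra) ltac:(rewrite Rabs_right; lra)).
  replace (x + (s - x)) with s in Hd by ring. rewrite Hgx, Rminus_0_r in Hd.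
  apply Rabs_def2 in Hd.
  replace (g s) with (g s / (s - x) * (s - x)) by (field; lra).
  apply Rmult_neg_pos; lra.
Qed.

(* At [x] itself the quotient is [0 / 0], which Rocq evaluates to [0]. *)
Lemma bounded_near_ratio_at_simple_zero (g h : R -> R) x lg lh :
  is_derive g x lg -> is_derive h x lh -> lh <> 0 -> g x = 0 -> h x = 0 ->
  bounded_near (locally x) (fun s => g s / h s).
Proof.
  intros Hg Hh Hlh Hgx Hhx. apply is_derive_Reals in Hg, Hh.
  assert (Hlh' : 0 < Rabs lh) by (apply Rabs_pos_lt, Hlh).
  destruct (Hg 1 Rlt_0_1) as [dg Hdg]. destruct (Hh (Rabs lh / 2) ltac:(lra)) as [dh Hdh].
  exists ((Rabs lg + 1) / (Rabs lh / 2)).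
  assert (0 < Rmin dg dh) by (apply Rmin_pos; apply cond_pos).
  exists (mkposreal _ H). intros s Hs. change R in s. change (Rabs (s - x) < Rmin dg dh) in Hs.
  assert (HK : 0 <= (Rabs lg + 1) / (Rabs lh / 2))
    by (apply Rmult_le_pos; [pose proof (Rabs_pos lg) | apply Rlt_le, Rinv_0_lt_compat]; lra).
  destruct (Req_dec s x) as [->|Hsx].
  { rewrite Hgx, Hhx. unfold Rdiv. rewrite Rmult_0_l, Rabs_R0. exact HK. }
  set (t := s - x). assert (Ht : t <> 0) by (unfold t; lra).
  pose proof (Rmin_l dg dh). pose proof (Rmin_r dg dh).
  specialize (Hdg t Ht ltac:(unfold t; lra)). specialize (Hdh t Ht ltac:(unfold t; lra)).
  replace (x + t) with s in Hdg, Hdh by (unfold t; ring).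
  rewrite Hgx, Rminus_0_r in Hdg. rewrite Hhx, Rminus_0_r in Hdh.
  assert (Hgt : Rabs (g s / t) <= Rabs lg + 1).
  { pose proof (Rabs_triang_inv (g s / t) lg). lra. }
  assert (Hht : Rabs lh / 2 <= Rabs (h s / t)).
  { pose proof (Rabs_triang_inv lh (h s / t)).
    rewrite <- Rabs_Ropp, Ropp_minus_distr in Hdh. lra. }
  replace (g s / h s) with ((g s / t) / (h s / t)).
  2: { field. split; [|exact Ht]. intros E. rewrite E in Hht. unfold Rdiv in Hht.
       rewrite Rmult_0_l, Rabs_R0 in Hht. lra. }
  unfold Rdiv at 1. rewrite Rabs_mult, Rabs_inv.
  apply (Rmult_le_compat _ (Rabs lg + 1) _ (/ (Rabs lh / 2))); [apply Rabs_pos | | lra |].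
  - apply Rlt_le, Rinv_0_lt_compat. lra.
  - apply Rinv_le_contravar; lra.
Qed.

Lemma log_derivative_decreasing (f f1 f2 : R -> R) :
  (forall x, 0 < x -> is_derive f x (f1 x) /\ is_derive f1 x (f2 x)) ->
  (forall x, 0 < x -> 0 < f x) ->
  (forall x, 0 < x -> f2 x * f x - (f1 x) ^ 2 < 0) ->
  forall x y, 0 < x -> x < y -> f1 y / f y < f1 x / f x.
Proof.
  intros Hd Hpos Hlc x y Hx Hxy.
  apply (decreasing_of_derive_neg (fun t => f1 t / f t)
           (fun t => (f2 t * f t - f1 t * f1 t) / f t ^ 2)); [|lra|].
  - intros z Hz. destruct (Hd z ltac:(lra)) as [Hf Hf1].
    apply (is_derive_div f1 f z _ _ Hf1 Hf). specialize (Hpos z ltac:(lra)). lra.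
  - intros z Hz. specialize (Hpos z ltac:(lra)). specialize (Hlc z ltac:(lra)).
    apply Rdiv_neg_pos; [simpl in Hlc; lra | apply pow_lt; lra].
Qed.

Lemma is_derive_eq_value (g : R -> R) (x l l' : R) : is_derive g x l -> l = l' -> is_derive g x l'.
Proof. intros H <-. exact H. Qed.

Lemma is_derive_picone_form (w W F Z : R -> R) r dW dF dZ :
  is_derive w r (W r) -> is_derive W r dW -> is_derive F r dF -> is_derive Z r dZ ->
  Z r <> 0 ->
  is_derive (fun s => s * w s * W s + s ^ 2 * w s ^ 2 * F s / Z s) r
    (W r * w r + r * W r * W r + r * w r * dW +
     ((2 * r * w r ^ 2 * F r + 2 * r ^ 2 * w r * W r * F r + r ^ 2 * w r ^ 2 * dF) * Z r
      - r ^ 2 * w r ^ 2 * F r * dZ) / Z r ^ 2).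
Proof.
  intros Hw HW HF HZ HZ0. auto_derive.
  - repeat split; try (eexists; eassumption). exact HZ0.
  - replace (Derive (fun x => w x) r) with (W r) by (symmetry; apply is_derive_unique, Hw).
    replace (Derive (fun x => W x) r) with dW by (symmetry; apply is_derive_unique, HW).
    replace (Derive (fun x => F x) r) with dF by (symmetry; apply is_derive_unique, HF).
    replace (Derive (fun x => Z x) r) with dZ by (symmetry; apply is_derive_unique, HZ).
    field. exact HZ0.
Qed.

Lemma zero_of_contracting_bounds (P : R -> Prop) k x :
  0 <= k < 1 -> P 1 -> (forall B, P B -> P (k * B)) -> (forall B, P B -> Rabs x <= B) -> x = 0.
Proof.
  intros Hk H1 Hstep Hx.
  assert (Hn : forall n, Rabs x <= k ^ n).
  { intros n. apply Hx. induction n as [|n IH]; simpl; [exact H1|].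
    apply Hstep, IH. }
  destruct (Req_dec x 0) as [|Hx0]; [assumption|exfalso].
  assert (Hpos : 0 < Rabs x) by (apply Rabs_pos_lt, Hx0).
  destruct (pow_lt_1_zero k ltac:(rewrite Rabs_right; lra) (Rabs x) Hpos) as [N HN].
  specialize (HN N (le_n N)). rewrite Rabs_right in HN by (apply Rle_ge, pow_le; lra).
  specialize (Hn N). lra.
Qed.

Lemma real_induction (P : R -> Prop) b :
  (exists d, 0 < d /\ forall s, 0 <= s < d -> P s) ->
  (forall T, 0 < T < b -> (forall s, 0 <= s < T -> P s) ->
     exists e, 0 < e /\ forall s, T <= s < T + e -> P s) ->
  forall s, 0 <= s < b -> P s.
Proof.
  intros [d [Hd Hstart]] Hstep s Hs.
  set (A := fun t => t <= b /\ forall s, 0 <= s < t -> P s).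
  destruct (completeness A) as [xi [Hub Hlub]].
  { exists b. intros t [Ht _]. exact Ht. }
  { exists 0. split; [lra|]. intros z Hz. lra. }
  assert (Hxi_b : xi <= b) by (apply Hlub; intros t [Ht _]; exact Ht).
  assert (Hbelow : forall z, 0 <= z < xi -> P z).
  { intros z Hz. apply NNPP. intros Hnz.
    assert (xi <= z); [|lra].
    apply Hlub. intros t [_ Ht]. apply Rnot_lt_le. intros Hzt. apply Hnz, Ht. lra. }
  assert (Hd_xi : Rmin d b <= xi).
  { apply Hub. split; [apply Rmin_r|]. intros z Hz. apply Hstart.
    pose proof (Rmin_l d b). lra. }
  destruct (Rle_lt_or_eq_dec xi b Hxi_b) as [Hlt|<-]; [exfalso|apply Hbelow; lra].
  assert (Hxi0 : 0 < xi).
  { apply Rlt_le_trans with (Rmin d b); [apply Rmin_pos|]; lra. }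
  destruct (Hstep xi (conj Hxi0 Hlt) Hbelow) as [e [He Hnext]].
  assert (Rmin (xi + e / 2) b <= xi); [|pose proof (Rmin_glb_lt (xi + e / 2) b xi); lra].
  apply Hub. split; [apply Rmin_r|]. intros z Hz.
  pose proof (Rmin_l (xi + e / 2) b).
  destruct (Rlt_or_le z xi); [apply Hbelow | apply Hnext]; lra.
Qed.

(** * The radial equation *)

Section Radial.

Variables (q : R -> R -> R) (v : R -> R).
Hypothesis Hv : radial_sol q v.

Lemma radial_is_derive r : 0 < r < 1 -> is_derive v r (Derive v r).
Proof. intros Hr. apply Derive_correct, (proj1 Hv r Hr). Qed.

Lemma radial_is_derive2 r :
  0 < r < 1 -> is_derive (Derive v) r (- (Derive v r / r) - q r (v r)).
Proof.
  intros Hr. destruct (proj1 Hv r Hr) as [_ [Hd2 Heq]].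
  replace (- (Derive v r / r) - q r (v r)) with (Derive (Derive v) r)
    by (unfold Rdiv; lra).
  apply Derive_correct, Hd2.
Qed.

Lemma radial_continuous r : 0 < r < 1 -> continuous v r.
Proof. intros Hr. apply (ex_derive_continuous v r). eexists. apply radial_is_derive, Hr. Qed.

Lemma radial_continuous_Derive r : 0 < r < 1 -> continuous (Derive v) r.
Proof.
  intros Hr. apply (ex_derive_continuous (Derive v) r). eexists. apply radial_is_derive2, Hr.
Qed.

Lemma radial_right_cont_0 : filterlim v (at_right 0) (locally (v 0)).
Proof. apply right_deriv_filterlim with 0, (proj1 (proj2 Hv)). Qed.

Lemma flux_is_derive r :
  0 < r < 1 -> is_derive (fun s => s * Derive v s) r (- (r * q r (v r))).
Proof.
  intros Hr.
  assert (H := is_derive_mult (fun s => s) (Derive v) r 1 _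
                 (is_derive_id r) (radial_is_derive2 r Hr) Rmult_comm).
  eapply is_derive_ext; [intros s; reflexivity|].
  replace (- (r * q r (v r))) with
    (plus (mult 1 (Derive v r)) (mult r (- (Derive v r / r) - q r (v r))))
    by (unfold plus, mult; simpl; field; lra).
  exact H.
Qed.

Lemma flux_increment_bound c s K :
  0 < c <= s -> s < 1 -> (forall e, c < e < s -> Rabs (q e (v e)) <= K) ->
  Rabs (s * Derive v s - c * Derive v c) <= K * (s - c).
Proof.
  intros Hc Hs HK. destruct (Rle_lt_or_eq_dec c s (proj2 Hc)) as [Hlt|<-].
  2: { rewrite Rminus_diag, Rabs_R0. lra. }
  destruct (MVT_open _ _ c s Hlt (fun z Hz => flux_is_derive z ltac:(lra))) as [e [He Ee]].
  rewrite Ee, Rabs_mult, Rabs_Ropp, Rabs_mult, (Rabs_right e), (Rabs_right (s - c)) by lra.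
  specialize (HK e He). pose proof (Rabs_pos (q e (v e))).
  apply Rmult_le_compat_r; [lra|]. nra.
Qed.

(* [v'(0) = 0] bounds [v'] at a mean-value point of [(s/2, s)], and the flux [r v'] carries
   the bound from there to [s]. *)
Lemma Derive_bounded_near_0 :
  bounded_near (at_right 0) (fun s => q s (v s)) -> bounded_near (at_right 0) (Derive v).
Proof.
  intros [K HK]. apply at_right_iff in HK as [d0 [Hd0 HK]].
  destruct (proj1 (at_right_iff 0 _) (filterlim_eps _ 0 (proj1 (proj2 Hv)) 1 Rlt_0_1))
    as [d1 [Hd1 Hq]].
  exists (3 + Rabs K). apply at_right_iff.
  exists (Rmin (Rmin d0 d1) 1). split; [repeat apply Rmin_pos; lra|].
  intros s Hs.
  pose proof (Rmin_l (Rmin d0 d1) 1). pose proof (Rmin_r (Rmin d0 d1) 1).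
  pose proof (Rmin_l d0 d1). pose proof (Rmin_r d0 d1).
  assert (Hquot : forall h, 0 < h <= s -> Rabs ((v h - v 0) / h) < 1).
  { intros h Hh. specialize (Hq h ltac:(lra)). rewrite Rplus_0_l, Rminus_0_r in Hq. exact Hq. }
  destruct (MVT_open v (Derive v) (s / 2) s ltac:(lra)
              (fun z Hz => radial_is_derive z ltac:(lra))) as [c [Hc Ec]].
  assert (Hvc : Rabs (Derive v c) < 3).
  { replace (Derive v c) with (2 * ((v s - v 0) / s) - (v (s / 2) - v 0) / (s / 2))
      by (apply Rmult_eq_reg_r with (s - s / 2); [rewrite <- Ec; field|]; lra).
    eapply Rle_lt_trans; [apply Rabs_triang|].
    rewrite Rabs_Ropp, Rabs_mult, (Rabs_right 2) by lra.
    pose proof (Hquot s ltac:(lra)). pose proof (Hquot (s / 2) ltac:(lra)). lra. }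
  assert (Hflux := flux_increment_bound c s (Rabs K) ltac:(lra) ltac:(lra)
                     (fun e He => Rle_trans _ _ _ (HK e ltac:(lra)) (Rle_abs K))).
  apply Rmult_le_reg_l with s; [lra|].
  rewrite <- (Rabs_right s) at 1 by lra. rewrite <- Rabs_mult.
  replace (s * Derive v s) with (c * Derive v c + (s * Derive v s - c * Derive v c)) by ring.
  eapply Rle_trans; [apply Rabs_triang|]. rewrite Rabs_mult, (Rabs_right c) by lra.
  pose proof (Rabs_pos K). pose proof (Rabs_pos (Derive v c)). nra.
Qed.

Lemma Derive_bounded_near_1 :
  bounded_near (at_left 1) (fun s => q s (v s)) -> bounded_near (at_left 1) (Derive v).
Proof.
  intros [K HK]. apply at_left_iff in HK as [d [Hd HK]].
  set (s0 := 1 - Rmin d (1 / 2) / 2).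
  pose proof (Rmin_l d (1 / 2)). pose proof (Rmin_r d (1 / 2)).
  assert (0 < Rmin d (1 / 2)) by (apply Rmin_pos; lra).
  exists (2 * (Rabs (s0 * Derive v s0) + Rabs K)). apply at_left_iff.
  assert (Hs0 : 1 / 2 < s0 < 1) by (unfold s0; lra).
  exists (1 - s0). split; [lra|]. intros s Hs.
  assert (Hflux := flux_increment_bound s0 s (Rabs K) ltac:(unfold s0 in *; lra) ltac:(lra)
                     (fun e He => Rle_trans _ _ _ (HK e ltac:(unfold s0 in *; lra)) (Rle_abs K))).
  assert (Hs_flux : Rabs (s * Derive v s) <= Rabs (s0 * Derive v s0) + Rabs K).
  { replace (s * Derive v s) with (s0 * Derive v s0 + (s * Derive v s - s0 * Derive v s0)) by ring.
    eapply Rle_trans; [apply Rabs_triang|].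
    assert (Rabs K * (s - s0) <= Rabs K * 1)
      by (apply Rmult_le_compat_l; [apply Rabs_pos | unfold s0 in *; lra]).
    lra. }
  rewrite Rabs_mult, (Rabs_right s) in Hs_flux by lra.
  assert (1 / 2 * Rabs (Derive v s) <= s * Rabs (Derive v s))
    by (apply Rmult_le_compat_r; [apply Rabs_pos | unfold s0 in *; lra]).
  lra.
Qed.

Lemma flux_neg X :
  0 < X < 1 -> bounded_near (at_right 0) (fun s => q s (v s)) ->
  (forall s, 0 < s < X -> 0 < q s (v s)) -> 0 <= q X (v X) -> X * Derive v X < 0.
Proof.
  intros HX Hb Hpos HqX.
  set (g := fun s => s * Derive v s).
  assert (Hg : forall z, 0 < z < 1 -> is_derive g z (- (z * q z (v z)))) by exact flux_is_derive.
  assert (Hg0 : filterlim g (at_right 0) (locally 0)).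
  { apply filterlim_mult_bounded; [|exact (Derive_bounded_near_0 Hb)].
    apply filterlim_id_at_right. }
  assert (Hhalf : g (X / 2) <= 0).
  { apply (filterlim_ge_const (F := at_right 0) g 0 (g (X / 2))); [|exact Hg0].
    apply at_right_iff. exists (X / 2). split; [lra|]. intros s Hs.
    apply (nonincreasing_of_derive_nonpos g (fun z => - (z * q z (v z))));
      [intros z Hz; apply Hg; lra | lra |].
    intros z Hz. specialize (Hpos z ltac:(lra)). nra. }
  assert (g X < g (X / 2)); [|unfold g in *; lra].
  apply (decreasing_of_derive_neg g (fun z => - (z * q z (v z))));
    [intros z Hz; apply Hg; lra | lra |].
  intros z Hz. specialize (Hpos z ltac:(lra)). nra.
Qed.

End Radial.

(** * Uniqueness for the linear radial equation *)

Section LinearRadial.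

Variables (a v : R -> R).
Hypothesis Hv : radial_sol (fun r y => a r * y) v.

Lemma radial_sol_opp : radial_sol (fun r y => a r * y) (fun r => - v r).
Proof.
  destruct Hv as [Hode [Hrd [Hleft H1]]].
  assert (ED : Derive (fun r => - v r) = fun r => - Derive v r)
    by (apply functional_extensionality; intros x; apply Derive_opp).
  split; [|split; [|split]].
  - intros r Hr. destruct (Hode r Hr) as [Hd1 [Hd2 Heq]]. rewrite ED, Derive_opp.
    split; [|split; [|lra]].
    + eexists. apply (is_derive_opp v r), Derive_correct, Hd1.
    + eexists. apply (is_derive_opp (Derive v) r), Derive_correct, Hd2.
  - unfold right_deriv in *.
    assert (Hopp : filterlim (fun h => opp ((v (0 + h) - v 0) / h)) (at_right 0) (locally (opp 0)))
      by exact (filterlim_comp _ _ _ _ opp _ _ (locally (opp 0)) Hrd (filterlim_opp 0)).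
    replace (opp 0) with 0 in Hopp by (unfold opp; simpl; ring).
    eapply filterlim_ext; [|exact Hopp].
    intros h. unfold opp; simpl. unfold Rdiv. ring.
  - exact (filterlim_comp _ _ _ v opp _ _ (locally (opp (v 1))) Hleft (filterlim_opp (v 1))).
  - rewrite H1. apply Ropp_0.
Qed.

Lemma radial_linear_contraction_0 A B d :
  v 0 = 0 -> d < 1 -> (forall s, 0 < s < d -> Rabs (a s) <= A /\ Rabs (v s) <= B) ->
  forall r, 0 < r < d -> Rabs (v r) <= A * d * B.
Proof.
  intros H0 Hd1 Hb r Hr.
  assert (HAB : 0 <= A /\ 0 <= B).
  { destruct (Hb r Hr) as [HA HB]. pose proof (Rabs_pos (a r)). pose proof (Rabs_pos (v r)). lra. }
  assert (Hv0 : filterlim v (at_right 0) (locally 0))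
    by (rewrite <- H0 at 2; exact (radial_right_cont_0 _ _ Hv)).
  assert (Hq : forall e, 0 < e < d -> Rabs (a e * v e) <= A * B).
  { intros e He. rewrite Rabs_mult. destruct (Hb e He).
    apply Rmult_le_compat; try apply Rabs_pos; assumption. }
  assert (Hflux0 : filterlim (fun s => s * Derive v s) (at_right 0) (locally 0)).
  { apply filterlim_mult_bounded; [apply filterlim_id_at_right|].
    apply (Derive_bounded_near_0 _ _ Hv). exists (A * B).
    apply at_right_iff. exists d. split; [lra|]. intros s Hs. apply Hq. lra. }
  assert (Hder : forall c, 0 < c < d -> Rabs (Derive v c) <= A * B).
  { intros c Hc. apply Rmult_le_reg_l with c; [lra|].
    rewrite <- (Rabs_right c) at 1 by lra. rewrite <- Rabs_mult.
    apply (le_of_le_plus_vanishing _ _ _ Hflux0), at_right_iff.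
    exists c. split; [lra|]. intros s Hs.
    pose proof (flux_increment_bound _ _ Hv s c (A * B) ltac:(lra) ltac:(lra)
                  (fun e He => Hq e ltac:(lra))).
    pose proof (Rabs_triang_inv (c * Derive v c) (s * Derive v s)).
    assert (0 <= A * B) by (apply Rmult_le_pos; lra). nra. }
  apply (le_of_le_plus_vanishing _ _ _ Hv0), at_right_iff.
  exists r. split; [lra|]. intros s Hs.
  destruct (MVT_open v (Derive v) s r ltac:(lra)
              (fun z Hz => radial_is_derive _ _ Hv z ltac:(lra))) as [c [Hc Ec]].
  replace (v r) with (v s + Derive v c * (r - s)) by lra.
  eapply Rle_trans; [apply Rabs_triang|].
  rewrite Rabs_mult, (Rabs_right (r - s)) by lra.
  assert (Rabs (Derive v c) * (r - s) <= A * B * d)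
    by (apply Rmult_le_compat; [apply Rabs_pos | | apply Hder |]; lra).
  lra.
Qed.

Lemma vanish_near_0 :
  v 0 = 0 -> bounded_near (at_right 0) a ->
  exists d, 0 < d /\ forall s, 0 <= s < d -> v s = 0.
Proof.
  intros H0 [A0 HA].
  set (A := Rabs A0).
  assert (Hv0 : filterlim v (at_right 0) (locally 0))
    by (rewrite <- H0 at 2; exact (radial_right_cont_0 _ _ Hv)).
  destruct (proj1 (at_right_iff 0 _) (filter_and _ _ HA (filterlim_eps v 0 Hv0 1 Rlt_0_1)))
    as [d0 [Hd0 Hsmall]].
  assert (HA0 : 0 <= A) by apply Rabs_pos.
  set (d := Rmin d0 (/ (2 * (A + 1)))).
  assert (Hd : 0 < d /\ d <= d0 /\ (A + 1) * d <= 1 / 2).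
  { assert (Hd2 : d <= / (2 * (A + 1))) by apply Rmin_r.
    apply (Rmult_le_compat_l (A + 1)) in Hd2; [|lra].
    replace ((A + 1) * / (2 * (A + 1))) with (1 / 2) in Hd2 by (field; lra).
    repeat split; [apply Rmin_pos; [|apply Rinv_0_lt_compat]; lra | apply Rmin_l | exact Hd2]. }
  set (P := fun B => forall s, 0 < s < d -> Rabs (v s) <= B).
  exists d. split; [lra|]. intros s Hs.
  destruct (Req_dec s 0) as [->|Hs0]; [exact H0|].
  apply (zero_of_contracting_bounds P (A * d)); [split; nra | | |].
  - intros z Hz. left. rewrite <- (Rminus_0_r (v z)). apply Hsmall. lra.
  - intros B HB r Hr. apply (radial_linear_contraction_0 A B d H0); [nra | | exact Hr].
    intros z Hz. split; [|apply HB, Hz].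
    eapply Rle_trans; [apply Hsmall; lra | apply Rle_abs].
  - intros B HB. apply HB. lra.
Qed.

Lemma radial_linear_contraction T A B d :
  0 < T -> T + d < 1 -> v T = 0 -> Derive v T = 0 ->
  (forall s, T < s < T + d -> Rabs (a s) <= A /\ Rabs (v s) <= B /\ Rabs (Derive v s) <= B) ->
  forall r, T < r < T + d ->
    Rabs (v r) <= (/ T + A) * d * B /\ Rabs (Derive v r) <= (/ T + A) * d * B.
Proof.
  intros HT HTd HvT HDT Hb r Hr.
  assert (HAB : 0 <= A /\ 0 <= B).
  { destruct (Hb r Hr) as [HA [HB _]].
    pose proof (Rabs_pos (a r)). pose proof (Rabs_pos (v r)). lra. }
  assert (HM : 1 < / T + A)
    by (assert (1 < / T) by (rewrite <- Rinv_1; apply Rinv_lt_contravar; lra); lra).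
  destruct (MVT_open v (Derive v) T r (proj1 Hr)
              (fun z Hz => radial_is_derive _ _ Hv z ltac:(lra))) as [c1 [Hc1 Ec1]].
  destruct (MVT_open (Derive v) _ T r (proj1 Hr)
              (fun z Hz => radial_is_derive2 _ _ Hv z ltac:(lra))) as [c2 [Hc2 Ec2]].
  rewrite HvT, Rminus_0_r in Ec1. rewrite HDT, Rminus_0_r in Ec2.
  rewrite Ec1, Ec2, !Rabs_mult, (Rabs_right (r - T)) by lra.
  destruct (Hb c1 ltac:(lra)) as [_ [_ HD1]].
  destruct (Hb c2 ltac:(lra)) as [Ha2 [Hv2 HD2]].
  assert (Hsecond : Rabs (- (Derive v c2 / c2) - a c2 * v c2) <= (/ T + A) * B).
  { unfold Rminus. eapply Rle_trans; [apply Rabs_triang|].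
    rewrite !Rabs_Ropp, Rabs_mult. unfold Rdiv. rewrite Rabs_mult, Rabs_inv, (Rabs_right c2) by lra.
    assert (/ c2 <= / T) by (apply Rinv_le_contravar; lra).
    assert (Rabs (Derive v c2) * / c2 <= B * / T)
      by (apply Rmult_le_compat; try apply Rabs_pos; try lra;
          left; apply Rinv_0_lt_compat; lra).
    assert (Rabs (a c2) * Rabs (v c2) <= A * B)
      by (apply Rmult_le_compat; try apply Rabs_pos; lra).
    lra. }
  assert (Rabs (Derive v c1) * (r - T) <= B * d)
    by (apply Rmult_le_compat; try apply Rabs_pos; lra).
  assert (Rabs (- (Derive v c2 / c2) - a c2 * v c2) * (r - T) <= (/ T + A) * B * d)
    by (apply Rmult_le_compat; try apply Rabs_pos; lra).
  assert (0 <= d * B) by (apply Rmult_le_pos; lra).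
  split; nra.
Qed.

Lemma vanish_near_point T :
  0 < T < 1 -> v T = 0 -> Derive v T = 0 -> bounded_near (at_right T) a ->
  exists d, 0 < d /\ forall s, T <= s < T + d -> v s = 0.
Proof.
  intros HT HvT HDT [A0 HA].
  set (M := / T + Rabs A0).
  assert (HM : 0 < M)
    by (pose proof (Rabs_pos A0); pose proof (Rinv_0_lt_compat T (proj1 HT)); unfold M; lra).
  assert (Hnear : at_right T (fun s => Rabs (v s - v T) < 1 /\ Rabs (Derive v s - Derive v T) < 1)).
  { apply filter_le_within, filter_and; apply filterlim_eps; try exact Rlt_0_1.
    - apply (radial_continuous _ _ Hv T HT).
    - apply (radial_continuous_Derive _ _ Hv T HT). }
  destruct (proj1 (at_right_iff T _) (filter_and _ _ HA Hnear)) as [d0 [Hd0 Hsmall]].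
  rewrite HvT, HDT in Hsmall.
  set (d := Rmin (Rmin d0 ((1 - T) / 2)) (/ (2 * M))).
  assert (Hd : 0 < d /\ T + d < 1 /\ d <= d0 /\ M * d <= 1 / 2).
  { pose proof (Rmin_l (Rmin d0 ((1 - T) / 2)) (/ (2 * M))).
    pose proof (Rmin_r (Rmin d0 ((1 - T) / 2)) (/ (2 * M))).
    pose proof (Rmin_l d0 ((1 - T) / 2)). pose proof (Rmin_r d0 ((1 - T) / 2)).
    assert (M * d <= M * / (2 * M)) by (apply Rmult_le_compat_l; unfold d in *; lra).
    replace (M * / (2 * M)) with (1 / 2) in * by (field; lra).
    unfold d in *. repeat split; try lra.
    repeat apply Rmin_pos; try apply Rinv_0_lt_compat; lra. }
  set (P := fun B => forall s, T < s < T + d -> Rabs (v s) <= B /\ Rabs (Derive v s) <= B).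
  exists d. split; [lra|]. intros s Hs.
  destruct (Rle_lt_or_eq_dec T s (proj1 Hs)) as [HTs | <-]; [|exact HvT].
  apply (zero_of_contracting_bounds P (M * d)); [split; [apply Rmult_le_pos|]; lra | | |].
  - intros z Hz. destruct (Hsmall z ltac:(lra)) as [_ [Hz1 Hz2]].
    rewrite Rminus_0_r in Hz1, Hz2. lra.
  - intros B HB r Hr. apply (radial_linear_contraction T (Rabs A0) B d); try lra.
    intros z Hz. split; [|apply HB, Hz].
    eapply Rle_trans; [apply Hsmall; lra | apply Rle_abs].
  - intros B HB. apply HB. lra.
Qed.

Lemma radial_linear_unique :
  v 0 = 0 -> bounded_near (at_right 0) a -> (forall T, 0 < T < 1 -> continuous a T) ->
  forall r, 0 <= r <= 1 -> v r = 0.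
Proof.
  intros H0 Ha0 Ha r Hr.
  destruct (Rle_lt_or_eq_dec r 1 (proj2 Hr)) as [Hr1 | ->]; [|exact (proj2 (proj2 (proj2 Hv)))].
  apply (real_induction (fun s => v s = 0) 1); [exact (vanish_near_0 H0 Ha0) | | lra].
  intros T HT Hbelow.
  assert (Hleft : at_left T (fun s => v s = 0))
    by (apply at_left_iff; exists T; split; [lra | intros s Hs; apply Hbelow; lra]).
  assert (Hcont := radial_continuous _ _ Hv T HT).
  assert (HvT : v T = 0).
  { apply Rle_antisym.
    - apply (continuous_le_of_left v (fun _ => 0) T Hcont (continuous_const 0 T)).
      eapply filter_imp; [|exact Hleft]. intros s Hs. cbv beta in Hs |- *. lra.
    - apply (continuous_le_of_left (fun _ => 0) v T (continuous_const 0 T) Hcont).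
      eapply filter_imp; [|exact Hleft]. intros s Hs. cbv beta in Hs |- *. lra. }
  apply vanish_near_point; [exact HT | exact HvT | |].
  - exact (derive_eq_0_of_left_zero v T _ (radial_is_derive _ _ Hv T HT) Hleft HvT).
  - destruct (bounded_near_of_filterlim (F := locally T) a (a T) (Ha T HT)) as [K HK].
    exists K. apply filter_le_within, HK.
Qed.

End LinearRadial.

(** * Linearization at a positive solution *)

Section PositiveSolution.

Variables (f f1 f2 u : R -> R).
Hypothesis Hf : C2_on_nonneg f f1 f2.
Hypothesis Hfpos : forall x, 0 < x -> 0 < f x /\ 0 < f1 x.
Hypothesis Hu : radial_sol (fun _ y => f y) u.
Hypothesis Hupos : forall r, 0 <= r < 1 -> 0 < u r.
Hypothesis Hlc : forall x, 0 < x -> f2 x * f x - (f1 x) ^ 2 < 0.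

Lemma f_is_derive x : 0 < x -> is_derive f x (f1 x).
Proof. intros Hx. apply (proj1 Hf x Hx). Qed.

Lemma f1_is_derive x : 0 < x -> is_derive f1 x (f2 x).
Proof. intros Hx. apply (proj1 Hf x Hx). Qed.

Lemma comp_u_is_derive (g g' : R -> R) r :
  (forall x, 0 < x -> is_derive g x (g' x)) -> 0 < r < 1 ->
  is_derive (fun s => g (u s)) r (g' (u r) * Derive u r).
Proof.
  intros Hg Hr.
  rewrite Rmult_comm.
  exact (is_derive_comp g u r _ _ (Hg (u r) (Hupos r ltac:(lra))) (radial_is_derive _ _ Hu r Hr)).
Qed.

Lemma comp_u_continuous (g g' : R -> R) r :
  (forall x, 0 < x -> is_derive g x (g' x)) -> 0 < r < 1 -> continuous (fun s => g (u s)) r.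
Proof.
  intros Hg Hr. apply (ex_derive_continuous (fun s => g (u s)) r).
  eexists. apply (comp_u_is_derive g g' r Hg Hr).
Qed.

Lemma comp_u_bounded_near_0 (g g' : R -> R) :
  (forall x, 0 < x -> is_derive g x (g' x)) -> bounded_near (at_right 0) (fun s => g (u s)).
Proof.
  intros Hg. apply (bounded_near_of_filterlim _ (g (u 0))).
  eapply filterlim_comp; [exact (radial_right_cont_0 _ _ Hu)|].
  apply (ex_derive_continuous g (u 0)). eexists. apply Hg, Hupos. lra.
Qed.

Lemma comp_u_bounded_near_1 (g : R -> R) l :
  right_deriv g 0 l -> bounded_near (at_left 1) (fun s => g (u s)).
Proof.
  intros Hg. apply (bounded_near_of_filterlim _ (g 0)).
  eapply filterlim_comp; [|exact (right_deriv_filterlim g 0 l Hg)].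
  apply filterlim_at_right_of_pos.
  - destruct Hu as [_ [_ [Hleft Hu1]]]. rewrite Hu1 in Hleft. exact Hleft.
  - apply at_left_iff. exists 1. split; [lra|]. intros s Hs. apply Hupos. lra.
Qed.

Lemma Derive_u_neg r : 0 < r < 1 -> Derive u r < 0.
Proof.
  intros Hr.
  assert (r * Derive u r < 0); [|nra].
  apply (flux_neg _ u Hu r Hr (comp_u_bounded_near_0 f f1 f_is_derive)).
  - intros s Hs. apply Hfpos, Hupos. lra.
  - apply Rlt_le, Hfpos, Hupos. lra.
Qed.

Lemma u_decreasing r1 r2 : 0 < r1 -> r1 < r2 -> r2 < 1 -> u r2 < u r1.
Proof.
  intros H1 H12 H2. apply (decreasing_of_derive_neg u (Derive u)); [|lra|].
  - intros z Hz. apply (radial_is_derive _ _ Hu). lra.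
  - intros z Hz. apply Derive_u_neg. lra.
Qed.

Lemma log_derivative_along_u_increasing r1 r2 :
  0 < r1 -> r1 < r2 -> r2 < 1 -> f1 (u r1) / f (u r1) < f1 (u r2) / f (u r2).
Proof.
  intros H1 H12 H2.
  apply (log_derivative_decreasing f f1 f2); [| | | apply Hupos; lra | apply u_decreasing; lra].
  - intros x Hx. split; [apply f_is_derive | apply f1_is_derive]; exact Hx.
  - intros x Hx. apply Hfpos, Hx.
  - exact Hlc.
Qed.

Section FirstZero.

Variables (w : R -> R) (xi : R).
Hypothesis Hw : radial_sol (fun r y => f1 (u r) * y) w.
Hypothesis Hxi : 0 < xi < 1.
Hypothesis Hwxi : w xi = 0.
Hypothesis Hwpos : forall s, 0 <= s < xi -> 0 < w s.

Definition gam := - (xi * Derive u xi).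

Definition zeta r := r * Derive u r + gam.

Definition picone s := s * w s * Derive w s + s ^ 2 * w s ^ 2 * f (u s) / zeta s.

Definition dpicone s :=
  s * (Derive w s + s * w s * f (u s) / zeta s) ^ 2 +
  s * w s ^ 2 * (2 * f (u s) - gam * f1 (u s)) / zeta s.

Lemma gam_pos : 0 < gam.
Proof. unfold gam. pose proof (Derive_u_neg xi Hxi). nra. Qed.

Lemma f1u_w_bounded_near_0 : bounded_near (at_right 0) (fun s => f1 (u s) * w s).
Proof.
  apply bounded_near_mult; [exact (comp_u_bounded_near_0 f1 f2 f1_is_derive)|].
  exact (bounded_near_of_filterlim _ _ (radial_right_cont_0 _ _ Hw)).
Qed.

Lemma Derive_w_xi_neg : Derive w xi < 0.
Proof.
  assert (xi * Derive w xi < 0); [|nra].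
  apply (flux_neg _ w Hw xi Hxi f1u_w_bounded_near_0).
  - intros s Hs. apply Rmult_lt_0_compat; [apply Hfpos, Hupos | apply Hwpos]; lra.
  - rewrite Hwxi, Rmult_0_r. lra.
Qed.

Lemma zeta_is_derive r : 0 < r < 1 -> is_derive zeta r (- (r * f (u r))).
Proof.
  intros Hr.
  assert (H := is_derive_plus _ _ r _ _ (flux_is_derive _ u Hu r Hr) (is_derive_const gam r)).
  unfold plus, zero in H; simpl in H. rewrite Rplus_0_r in H. exact H.
Qed.

Lemma zeta_decreasing x y : 0 < x -> x < y -> y < 1 -> zeta y < zeta x.
Proof.
  intros Hx Hxy Hy. apply (decreasing_of_derive_neg zeta (fun r => - (r * f (u r)))); [|lra|].
  - intros z Hz. apply zeta_is_derive. lra.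
  - intros z Hz. assert (0 < f (u z)) by (apply Hfpos, Hupos; lra). nra.
Qed.

Lemma zeta_xi : zeta xi = 0.
Proof. unfold zeta, gam. ring. Qed.

Lemma zeta_pos r : 0 < r < xi -> 0 < zeta r.
Proof. intros Hr. rewrite <- zeta_xi. apply zeta_decreasing; lra. Qed.

Lemma zeta_neg r : xi < r < 1 -> zeta r < 0.
Proof. intros Hr. rewrite <- zeta_xi. apply zeta_decreasing; lra. Qed.


Lemma picone_is_derive r : 0 < r < 1 -> r <> xi -> is_derive picone r (dpicone r).
Proof.
  intros Hr Hrxi.
  assert (Hz : zeta r <> 0).
  { destruct (Rlt_or_le r xi); [pose proof (zeta_pos r) | pose proof (zeta_neg r)]; lra. }
  assert (Hd := is_derive_picone_form w (Derive w) (fun s => f (u s)) zeta r _ _ _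
                  (radial_is_derive _ _ Hw r Hr) (radial_is_derive2 _ _ Hw r Hr)
                  (comp_u_is_derive f f1 r f_is_derive Hr) (zeta_is_derive r Hr) Hz).
  apply (is_derive_eq_value _ _ _ _ Hd).
  unfold dpicone, zeta in *. field. split; [exact Hz | lra].
Qed.

Lemma picone_factor s :
  picone s = w s * (s * Derive w s + s * s * (w s / zeta s) * f (u s)).
Proof. unfold picone, Rdiv. ring. Qed.

Lemma picone_lim_xi : filterlim picone (locally xi) (locally 0).
Proof.
  eapply filterlim_ext; [intros s; symmetry; apply picone_factor|].
  apply filterlim_mult_bounded.
  { rewrite <- Hwxi. exact (radial_continuous _ _ Hw xi Hxi). }
  assert (Hid : bounded_near (locally xi) (fun s => s))
    by exact (bounded_near_of_filterlim _ xi (filterlim_id _ _)).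
  apply bounded_near_plus; apply bounded_near_mult.
  - exact Hid.
  - exact (bounded_near_of_filterlim _ _ (radial_continuous_Derive _ _ Hw xi Hxi)).
  - apply bounded_near_mult; [apply bounded_near_mult; exact Hid|].
    apply (bounded_near_ratio_at_simple_zero w zeta xi _ _ (radial_is_derive _ _ Hw xi Hxi)
             (zeta_is_derive xi Hxi)); [|exact Hwxi | exact zeta_xi].
    assert (0 < f (u xi)) by (apply Hfpos, Hupos; lra). nra.
  - exact (bounded_near_of_filterlim _ _ (comp_u_continuous f f1 xi f_is_derive Hxi)).
Qed.

Lemma picone_factor_0 s :
  picone s = s * (w s * Derive w s + s * w s * w s * / zeta s * f (u s)).
Proof. unfold picone, Rdiv. ring. Qed.

Lemma picone_lim_0 : filterlim picone (at_right 0) (locally 0).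
Proof.
  eapply filterlim_ext; [intros s; symmetry; apply picone_factor_0|].
  apply filterlim_mult_bounded; [apply filterlim_id_at_right|].
  assert (Hid : bounded_near (at_right 0) (fun s => s))
    by exact (bounded_near_of_filterlim _ 0 (filterlim_id_at_right 0)).
  assert (Hwb : bounded_near (at_right 0) w)
    by exact (bounded_near_of_filterlim _ _ (radial_right_cont_0 _ _ Hw)).
  assert (Hflux_u : filterlim (fun s => s * Derive u s) (at_right 0) (locally 0)).
  { apply filterlim_mult_bounded; [apply filterlim_id_at_right|].
    exact (Derive_bounded_near_0 _ u Hu (comp_u_bounded_near_0 f f1 f_is_derive)). }
  assert (Hzeta : bounded_near (at_right 0) (fun s => / zeta s)).
  { pose proof gam_pos. apply (bounded_near_inv _ (gam / 2)); [lra|].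
    eapply filter_imp; [|exact (filterlim_eps _ 0 Hflux_u (gam / 2) ltac:(lra))].
    intros s Hs. cbv beta in Hs |- *. rewrite Rminus_0_r in Hs. apply Rabs_def2 in Hs.
    unfold zeta. rewrite Rabs_right; lra. }
  apply bounded_near_plus; apply bounded_near_mult.
  - exact Hwb.
  - exact (Derive_bounded_near_0 _ w Hw f1u_w_bounded_near_0).
  - repeat apply bounded_near_mult; assumption.
  - exact (comp_u_bounded_near_0 f f1 f_is_derive).
Qed.

Lemma picone_lim_1 : filterlim picone (at_left 1) (locally 0).
Proof.
  destruct Hf as [_ [Hf_rd [Hf1_rd _]]].
  eapply filterlim_ext; [intros s; symmetry; apply picone_factor|].
  assert (Hw1 : filterlim w (at_left 1) (locally 0)).
  { destruct Hw as [_ [_ [Hleft Hw1]]]. rewrite Hw1 in Hleft. exact Hleft. }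
  assert (Hwb := bounded_near_of_filterlim _ _ Hw1).
  assert (Hid : bounded_near (at_left 1) (fun s => s))
    by exact (bounded_near_of_filterlim _ 1 (filterlim_id_at_left 1)).
  set (m := (1 + xi) / 2).
  assert (Hm : zeta m < 0) by (apply zeta_neg; unfold m; lra).
  assert (Hzeta : bounded_near (at_left 1) (fun s => / zeta s)).
  { apply (bounded_near_inv _ (- zeta m)); [lra|].
    apply at_left_iff. exists (1 - m). split; [unfold m; lra|]. intros s Hs.
    assert (zeta s < zeta m) by (apply zeta_decreasing; unfold m in *; lra).
    rewrite Rabs_left; lra. }
  apply filterlim_mult_bounded; [exact Hw1|].
  apply bounded_near_plus; apply bounded_near_mult.
  - exact Hid.
  - apply (Derive_bounded_near_1 _ w Hw), bounded_near_mult; [|exact Hwb].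
    exact (comp_u_bounded_near_1 f1 (f2 0) Hf1_rd).
  - apply bounded_near_mult; [apply bounded_near_mult; exact Hid|].
    exact (bounded_near_mult _ _ Hwb Hzeta).
  - exact (comp_u_bounded_near_1 f (f1 0) Hf_rd).
Qed.

Lemma dpicone_split r :
  dpicone r = r * (Derive w r + r * w r * f (u r) / zeta r) ^ 2 +
              r * w r ^ 2 * ((2 * f (u r) - gam * f1 (u r)) / zeta r).
Proof. unfold dpicone, Rdiv. ring. Qed.

Lemma dpicone_nonneg r : 0 < r -> 0 <= (2 * f (u r) - gam * f1 (u r)) / zeta r -> 0 <= dpicone r.
Proof.
  intros Hr Hq. rewrite dpicone_split.
  apply Rplus_le_le_0_compat.
  - apply Rmult_le_pos; [lra | apply pow2_ge_0].
  - apply Rmult_le_pos; [apply Rmult_le_pos; [lra | apply pow2_ge_0] | exact Hq].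
Qed.

Lemma dpicone_pos r :
  0 < r -> w r <> 0 -> 0 < (2 * f (u r) - gam * f1 (u r)) / zeta r -> 0 < dpicone r.
Proof.
  intros Hr Hw0 Hq. rewrite dpicone_split.
  apply Rplus_le_lt_0_compat; [apply Rmult_le_pos; [lra | apply pow2_ge_0]|].
  apply Rmult_lt_0_compat; [apply Rmult_lt_0_compat; [lra | apply pow2_gt_0, Hw0] | exact Hq].
Qed.

Lemma first_zero_absurd_before :
  (forall r, 0 < r < xi -> gam * f1 (u r) < 2 * f (u r)) -> False.
Proof.
  intros Hsub.
  assert (Hinc : forall x y, 0 < x -> x < y -> y < xi -> picone x < picone y).
  { intros x y Hx Hxy Hy. apply (increasing_of_derive_pos picone dpicone); [| lra |].
    - intros z Hz. apply picone_is_derive; lra.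
    - intros z Hz. apply dpicone_pos; [lra | apply Rgt_not_eq, Hwpos; lra |].
      apply Rdiv_lt_0_compat; [specialize (Hsub z ltac:(lra)); lra | apply zeta_pos; lra]. }
  assert (Hlow : 0 <= picone (xi / 4)).
  { apply (filterlim_le_const (F := at_right 0) picone); [|exact picone_lim_0].
    apply at_right_iff. exists (xi / 4). split; [lra|]. intros s Hs.
    apply Rlt_le, Hinc; lra. }
  assert (Hhigh : picone (xi / 2) <= 0).
  { apply (filterlim_ge_const (F := at_left xi) picone);
      [|eapply filterlim_filter_le_1; [apply filter_le_within | exact picone_lim_xi]].
    apply at_left_iff. exists (xi / 2). split; [lra|]. intros s Hs.
    apply Rlt_le, Hinc; lra. }
  pose proof (Hinc (xi / 4) (xi / 2) ltac:(lra) ltac:(lra) ltac:(lra)). lra.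
Qed.

Lemma first_zero_absurd_after :
  (forall r, xi < r < 1 -> 2 * f (u r) < gam * f1 (u r)) -> False.
Proof.
  intros Hsuper.
  assert (Hq : forall z, xi < z < 1 -> 0 < (2 * f (u z) - gam * f1 (u z)) / zeta z).
  { intros z Hz. specialize (Hsuper z Hz). pose proof (zeta_neg z Hz).
    replace ((2 * f (u z) - gam * f1 (u z)) / zeta z)
      with ((gam * f1 (u z) - 2 * f (u z)) / - zeta z) by (field; lra).
    apply Rdiv_lt_0_compat; lra. }
  assert (Hnondec : forall x y, xi < x -> x <= y -> y < 1 -> picone x <= picone y).
  { intros x y Hx Hxy Hy. apply (nondecreasing_of_derive_nonneg picone dpicone); [| lra |].
    - intros z Hz. apply picone_is_derive; lra.
    - intros z Hz. apply dpicone_nonneg; [lra | apply Rlt_le, Hq; lra]. }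
  destruct (proj1 (at_right_iff xi _)
              (at_right_neg_of_derive_neg w xi _ (radial_is_derive _ _ Hw xi Hxi)
                 Derive_w_xi_neg Hwxi)) as [d [Hd Hwneg]].
  set (h := Rmin d (1 - xi) / 3).
  assert (Hh : 0 < h /\ xi + 3 * h <= xi + d /\ xi + 3 * h <= 1).
  { pose proof (Rmin_l d (1 - xi)). pose proof (Rmin_r d (1 - xi)).
    assert (0 < Rmin d (1 - xi)) by (apply Rmin_pos; lra). unfold h. lra. }
  assert (Hlow : 0 <= picone (xi + h)).
  { apply (filterlim_le_const (F := at_right xi) picone);
      [|eapply filterlim_filter_le_1; [apply filter_le_within | exact picone_lim_xi]].
    apply at_right_iff. exists h. split; [lra|]. intros s Hs. apply Hnondec; lra. }
  assert (Hhigh : picone (xi + 2 * h) <= 0).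
  { apply (filterlim_ge_const (F := at_left 1) picone); [|exact picone_lim_1].
    apply at_left_iff. exists (1 - (xi + 2 * h)). split; [lra|]. intros s Hs.
    apply Hnondec; lra. }
  assert (picone (xi + h) < picone (xi + 2 * h)); [|lra].
  apply (increasing_of_derive_pos picone dpicone); [| lra |].
  - intros z Hz. apply picone_is_derive; lra.
  - intros z Hz. apply dpicone_pos; [lra | | apply Hq; lra].
    apply Rlt_not_eq, Hwneg. lra.
Qed.

Lemma first_zero_absurd : False.
Proof.
  destruct (classic (exists rho, xi < rho < 1 /\ gam * f1 (u rho) <= 2 * f (u rho)))
    as [[rho [Hrho Hle]] | Hnone].
  - apply first_zero_absurd_before. intros r Hr.
    assert (Hfr : 0 < f (u r)) by (apply Hfpos, Hupos; lra).
    assert (Hfrho : 0 < f (u rho)) by (apply Hfpos, Hupos; lra).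
    pose proof (log_derivative_along_u_increasing r rho ltac:(lra) ltac:(lra) ltac:(lra)).
    assert (gam * (f1 (u rho) / f (u rho)) <= 2).
    { apply Rmult_le_reg_r with (f (u rho)); [exact Hfrho|].
      replace (gam * (f1 (u rho) / f (u rho)) * f (u rho)) with (gam * f1 (u rho)) by (field; lra).
      lra. }
    assert (gam * (f1 (u r) / f (u r)) < 2)
      by (eapply Rlt_le_trans; [apply Rmult_lt_compat_l; [exact gam_pos | eassumption] | ]; lra).
    replace (gam * f1 (u r)) with (gam * (f1 (u r) / f (u r)) * f (u r)) by (field; lra).
    nra.
  - apply first_zero_absurd_after. intros r Hr. apply Rnot_le_lt. intros Hle.
    apply Hnone. exists r. split; assumption.
Qed.

End FirstZero.

Lemma linearized_positive w :
  radial_sol (fun r y => f1 (u r) * y) w -> 0 < w 0 -> forall r, 0 <= r < 1 -> 0 < w r.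
Proof.
  intros Hw Hw0. apply (real_induction (fun s => 0 < w s) 1).
  - destruct (proj1 (at_right_iff 0 _) (filterlim_eps _ _ (radial_right_cont_0 _ _ Hw) (w 0) Hw0))
      as [d [Hd Hnear]].
    exists d. split; [exact Hd|]. intros s Hs.
    destruct (Rle_lt_or_eq_dec 0 s (proj1 Hs)) as [Hs0 | <-]; [|exact Hw0].
    specialize (Hnear s ltac:(lra)). apply Rabs_def2 in Hnear. lra.
  - intros T HT Hbelow.
    assert (Hcont := radial_continuous _ _ Hw T HT).
    assert (HwT : 0 <= w T).
    { apply (continuous_le_of_left (fun _ => 0) w T (continuous_const 0 T) Hcont).
      apply at_left_iff. exists T. split; [lra|]. intros s Hs. apply Rlt_le, Hbelow. lra. }
    destruct (Rle_lt_or_eq_dec 0 (w T) HwT) as [HwT' | HwT'].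
    2: { exfalso. apply (first_zero_absurd w T Hw HT (eq_sym HwT') Hbelow). }
    destruct (filterlim_eps (F := locally T) _ _ Hcont (w T) HwT') as [e He].
    exists e. split; [apply cond_pos|]. intros s Hs.
    specialize (He s (proj2 (ball_R T e s) ltac:(rewrite Rabs_right; lra))).
    apply Rabs_def2 in He. lra.
Qed.

End PositiveSolution.

Theorem theorem3p1 (f f1 f2 u w : R -> R) :
  C2_on_nonneg f f1 f2 ->
  (forall x, 0 < x -> 0 < f x /\ 0 < f1 x) ->
  (forall x, 0 < x -> f2 x * f x - (f1 x) ^ 2 < 0) ->
  radial_sol (fun _ y => f y) u ->
  (forall r, 0 <= r < 1 -> 0 < u r) ->
  radial_sol (fun r y => f1 (u r) * y) w ->
  (exists r, 0 <= r <= 1 /\ w r <> 0) ->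
  (forall r, 0 <= r < 1 -> 0 < w r) \/ (forall r, 0 <= r < 1 -> w r < 0).
Proof.
  intros Hf Hfpos Hlc Hu Hupos Hw [r0 [Hr0 Hwr0]].
  destruct (Rtotal_order (w 0) 0) as [Hneg | [Hzero | Hpos]].
  - right. intros r Hr.
    enough (0 < - w r) by lra.
    apply (linearized_positive f f1 f2 u Hf Hfpos Hu Hupos Hlc (fun r => - w r));
      [apply radial_sol_opp, Hw | lra | exact Hr].
  - exfalso. apply Hwr0.
    apply (radial_linear_unique (fun r => f1 (u r)) w Hw Hzero); [| | exact Hr0].
    + exact (comp_u_bounded_near_0 f u Hu Hupos f1 f2 (f1_is_derive f f1 f2 Hf)).
    + intros T HT. exact (comp_u_continuous f u Hu Hupos f1 f2 T (f1_is_derive f f1 f2 Hf) HT).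
  - left. exact (linearized_positive f f1 f2 u Hf Hfpos Hu Hupos Hlc w Hw Hpos).
Qed.
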